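(* Let $\Gamma\in\mathcal S$ with embedding $\varphi$. If $v_1\ne v_2$ are vertices with $\varphi(v_k)=E_{i_{v_k}}-\sum_{j\in J_{v_k}}E_j$ ($i_{v_k}\notin J_{v_k}$) for $k=1,2$, then $i_{v_1}\ne i_{v_2}$.
   Context: A plumbing tree is a finite tree $\Gamma$ each of whose vertices $v$ carries an integer decoration $d(v)$. $\Gamma$ is minimal if no vertex has decoration $-1$. For $n\ge 1$ let $(\mathbb Z^n,Q_n)$ be the lattice with basis $E_1,\dots,E_n$ and $Q_n(E_i,E_j)=-\delta_{ij}$, and let $K=\sum_{i=1}^n E_i$. A plumbing tree $\Gamma$ on $n$ vertices is a symplectic plumbing tree if there is a map $\varphi$ (an embedding) from its vertex set to $\mathbb Z^n$ such that: for distinct vertices $v_1,v_2$, $Q_n(\varphi(v_1),\varphi(v_2))$ is $1$ if they are adjacent and $0$ otherwise; $Q_n(\varphi(v),\varphi(v))=d(v)$ for every $v$; and $Q_n(\varphi(v),K)+Q_n(\varphi(v),\varphi(v))=-2$ for every $v$. $\mathcal S$ is the set of minimal, connected symplectic plumbing trees. *)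

From mathcomp Require Import all_boot all_order all_algebra.
Set Implicit Arguments. Unset Strict Implicit. Unset Printing Implicit Defensive.
Import GRing.Theory Num.Theory.
Local Open Scope ring_scope.

(* The lattice (Z^n, Q_n): vectors are integer row vectors of length n. *)
Definition Qn (n : nat) (x y : 'rV[int]_n) : int := - \sum_(i < n) x 0 i * y 0 i.
Definition Evec (n : nat) (i : 'I_n) : 'rV[int]_n := delta_mx 0 i.
Definition Kvec (n : nat) : 'rV[int]_n := \sum_(i < n) Evec i.

Definition simple_graph (V : finType) (adj : rel V) : Prop :=
  (forall x y, adj x y = adj y x) /\ (forall x, ~~ adj x x).

Definition connected_graph (V : finType) (adj : rel V) : Prop :=
  forall x y : V, connect adj x y.

Definition acyclic_graph (V : finType) (adj : rel V) : Prop :=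
  forall c : seq V, uniq c -> (3 <= size c)%N -> ~~ cycle adj c.

Definition is_tree (V : finType) (adj : rel V) : Prop :=
  simple_graph adj /\ connected_graph adj /\ acyclic_graph adj.

Definition minimal_plumbing (V : finType) (d : V -> int) : Prop :=
  forall v, d v != -1.

Definition symplectic_embedding (V : finType) (adj : rel V) (d : V -> int)
    (phi : V -> 'rV[int]_#|V|) : Prop :=
  (forall v1 v2, v1 != v2 -> Qn (phi v1) (phi v2) = (if adj v1 v2 then 1 else 0)) /\
  (forall v, Qn (phi v) (phi v) = d v) /\
  (forall v, Qn (phi v) (Kvec #|V|) + Qn (phi v) (phi v) = -2).

Definition in_S_with (V : finType) (adj : rel V) (d : V -> int)
    (phi : V -> 'rV[int]_#|V|) : Prop :=
  is_tree adj /\ minimal_plumbing d /\ symplectic_embedding adj d phi.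

Definition lead_form (n : nat) (i : 'I_n) (J : {set 'I_n}) : 'rV[int]_n :=
  Evec i - \sum_(j in J) Evec j.

From mathcomp Require Import all_boot all_order all_algebra.
Set Implicit Arguments. Unset Strict Implicit. Unset Printing Implicit Defensive.
Import Order.TTheory GRing.Theory Num.Theory.
Local Open Scope ring_scope.

(* Two vectors E_i - sum_J1 E_j and E_i - sum_J2 E_j with the same leading
   index pair to -(1 + |J1 /\ J2|) < 0, whereas the images of distinct
   vertices pair to 0 or 1. *)

Lemma lead_form_entry n (i : 'I_n) J k :
  lead_form i J 0 k = (i == k)%:R - (k \in J)%:R.
Proof.
rewrite /lead_form /Evec !mxE summxE eqxx /= [i == k]eq_sym; congr (_ - _).
under eq_bigr do rewrite mxE /=.
case: (boolP (k \in J)) => kJ.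
  rewrite (bigD1 k) //= !eqxx /= big1 ?addr0 // => j /andP [_ jk].
  by rewrite eq_sym (negbTE jk).
by rewrite big1 // => j jJ; case: eqP => // jk; rewrite jk jJ in kJ.
Qed.

Lemma Qn_lead_form_same n (i : 'I_n) (J1 J2 : {set 'I_n}) :
  i \notin J1 -> i \notin J2 ->
  Qn (lead_form i J1) (lead_form i J2) = - (1 + #|J1 :&: J2|%:R).
Proof.
move=> iJ1 iJ2; rewrite /Qn (bigD1 i) //= !lead_form_entry eqxx.
rewrite (negbTE iJ1) (negbTE iJ2) subr0 mul1r; congr (- (1 + _)).
rewrite -sum1_card natr_sum big_mkcond [RHS]big_mkcond; apply: eq_bigr => k _.
rewrite !lead_form_entry in_setI.
case: (eqVneq k i) => [-> | ki] /=; first by rewrite (negbTE iJ1).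
by rewrite !sub0r mulrNN -natrM; case: (k \in J1); case: (k \in J2).
Qed.

Lemma symplectic_embedding_Qn_ge0 (V : finType) (adj : rel V) d phi v1 v2 :
  symplectic_embedding adj d phi -> v1 != v2 -> 0 <= Qn (phi v1) (phi v2).
Proof. by move=> [Hq _] /Hq ->; case: (adj v1 v2). Qed.

Theorem lemma3p6 (V : finType) (adj : rel V) (d : V -> int)
    (phi : V -> 'rV[int]_#|V|) :
  in_S_with adj d phi ->
  forall (v1 v2 : V) (i1 i2 : 'I_#|V|) (J1 J2 : {set 'I_#|V|}),
    v1 != v2 ->
    i1 \notin J1 -> phi v1 = lead_form i1 J1 ->
    i2 \notin J2 -> phi v2 = lead_form i2 J2 ->
    i1 != i2.
Proof.
move=> [_ [_ emb]] v1 v2 i1 i2 J1 J2 v12 iJ1 e1 iJ2 e2.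
apply/eqP => i12; subst i2.
have := symplectic_embedding_Qn_ge0 emb v12.
by rewrite e1 e2 Qn_lead_form_same // oppr_ge0 leNgt ltr_wpDr.
Qed.
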